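(* Let $D,\chi,\varepsilon>0$, $a\ge 0$, $\beta>0$, $b=D\beta^2$, and assume $\frac{a\chi}{D\varepsilon}-\beta^2\le 0$. Then there are no $\rho_0>0$, $\phi_0>0$, $r_0>0$ and functions $\rho\in C^0[0,\infty)$, $\phi\in C^2[0,\infty)$ with $\rho\ge0$, $\phi\ge 0$, such that $\rho(0)=\rho_0$, $\phi(0)=\phi_0$, $\rho>0$ on $[0,r_0)$, $\rho\equiv 0$ on $[r_0,\infty)$, $\rho$ is differentiable on $(0,r_0)$ with $\varepsilon\rho\rho_r=\chi\rho\phi_r$ there, and $D\phi_{rr}+D\frac{\phi_r}{r}+a\rho-b\phi=0$ on $(0,\infty)$.
   Context: The system $\partial_r(\frac{\varepsilon}{2}\rho^2)=\chi\rho\phi_r$, $D\phi_{rr}+D\phi_r/r+a\rho-b\phi=0$ is the radially symmetric stationary form of a hyperbolic-parabolic chemotaxis model on $\mathbb{R}^2$ with pressure $p(\rho)=\frac{\varepsilon}{2}\rho^2$; $r=|x|$. *)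

From Stdlib Require Import Reals.
From Coquelicot Require Import Coquelicot.
Open Scope R_scope.

Definition cont_on_halfline (f : R -> R) : Prop :=
  forall x : R, 0 <= x ->
    filterlim f (within (fun y : R => 0 <= y) (locally x)) (locally (f x)).

Definition C0_halfline (f : R -> R) : Prop := cont_on_halfline f.

Definition C2_halfline_with (f f1 f2 : R -> R) : Prop :=
  (forall x : R, 0 < x -> is_derive f x (f1 x) /\ is_derive f1 x (f2 x)) /\
  cont_on_halfline f /\ cont_on_halfline f1 /\ cont_on_halfline f2.

(* On the support [0, r0) the first equation reads rho' = (chi/eps) phi', so
   rho - (chi/eps) phi is constant there; since rho r0 = 0 and phi >= 0, this
   gives rho <= (chi/eps) phi.  As a chi/eps <= D beta^2 = b, the second
   equation yields (r phi')' = r (b phi - a rho) / D >= 0, hence r phi' >= 0 and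
   phi' >= 0 on (0, r0).  Then rho' >= 0, so rho 0 <= rho r0 = 0, contradicting
   rho 0 > 0.  Only one-sided continuity is available at the endpoints, so
   monotonicity is obtained from the mean value theorem inside and a limit
   at the ends. *)

From Stdlib Require Import Reals Lra.
From Coquelicot Require Import Coquelicot.
Open Scope R_scope.

Lemma cont_on_halfline_minus (f g : R -> R) :
  cont_on_halfline f -> cont_on_halfline g ->
  cont_on_halfline (fun x => f x - g x).
Proof.
  intros Hf Hg x Hx.
  apply (filterlim_comp_2 (G := locally (f x)) (H := locally (opp (g x)))
           f (fun y => opp (g y)) plus).
  - exact (Hf x Hx).
  - apply (filterlim_comp _ _ _ g opp _ (locally (g x))); [exact (Hg x Hx) |].
    exact (filterlim_opp (V := R_NormedModule) (g x)).
  - exact (filterlim_plus (V := R_NormedModule) (f x) (opp (g x))).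
Qed.

Lemma cont_on_halfline_mult (f g : R -> R) :
  cont_on_halfline f -> cont_on_halfline g ->
  cont_on_halfline (fun x => f x * g x).
Proof.
  intros Hf Hg x Hx.
  apply (filterlim_comp_2 (G := locally (f x)) (H := locally (g x)) f g mult);
    [exact (Hf x Hx) | exact (Hg x Hx) |].
  apply (filterlim_mult (K := R_AbsRing)).
Qed.

Lemma cont_on_halfline_const (c : R) : cont_on_halfline (fun _ => c).
Proof. intros x _. apply filterlim_const. Qed.

Lemma cont_on_halfline_id : cont_on_halfline (fun x => x).
Proof.
  intros x _. apply (filterlim_filter_le_1 (F := locally x)); [| apply filterlim_id].
  intros P [d HP]. exists d. intros y Hy _. exact (HP y Hy).
Qed.

Lemma cont_on_halfline_at_right (g : R -> R) (x : R) :
  cont_on_halfline g -> 0 <= x -> filterlim g (at_right x) (locally (g x)).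
Proof.
  intros Hg Hx. apply (filterlim_filter_le_1 _ (F := within (fun y => 0 <= y) (locally x))).
  - intros P [d HP]. exists d. intros y Hy Hxy. apply HP; [exact Hy | lra].
  - exact (Hg x Hx).
Qed.

Lemma cont_on_halfline_at_left (g : R -> R) (x : R) :
  cont_on_halfline g -> 0 < x -> filterlim g (at_left x) (locally (g x)).
Proof.
  intros Hg Hx. apply (filterlim_filter_le_1 _ (F := within (fun y => 0 <= y) (locally x))).
  - intros P [d HP]. exists (mkposreal _ (Rmin_pos _ _ (cond_pos d) Hx)).
    intros y Hy _. simpl in Hy.
    assert (Hyx : Rabs (y - x) < d) by exact (Rlt_le_trans _ _ _ Hy (Rmin_l _ _)).
    assert (Hyx' : Rabs (y - x) < x) by exact (Rlt_le_trans _ _ _ Hy (Rmin_r _ _)).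
    apply HP; [exact Hyx |]. apply Rabs_def2 in Hyx'. lra.
  - exact (Hg x (Rlt_le _ _ Hx)).
Qed.

Section NonnegativeDerivative.

Variables (g g' : R -> R) (a b : R).
Hypothesis g_derive : forall x, a < x < b -> is_derive g x (g' x).
Hypothesis g'_nonneg : forall x, a < x < b -> 0 <= g' x.

Lemma nondecreasing_of_derive_nonneg s t : a < s -> s <= t -> t < b -> g s <= g t.
Proof.
  intros Has Hst Htb. destruct (Req_dec s t) as [-> | Hne]; [lra |].
  destruct (MVT_gen g s t g') as [c [Hc Hgst]].
  - rewrite Rmin_left, Rmax_right by lra. intros x Hx. apply g_derive. lra.
  - rewrite Rmin_left, Rmax_right by lra. intros x Hx.
    apply continuity_pt_filterlim, (ex_derive_continuous (V := R_NormedModule)).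
    exists (g' x). apply g_derive. lra.
  - rewrite Rmin_left, Rmax_right in Hc by lra.
    assert (0 <= g' c * (t - s)) by (apply Rmult_le_pos; [apply g'_nonneg |]; lra).
    lra.
Qed.

Lemma le_of_derive_nonneg :
  a < b -> filterlim g (at_right a) (locally (g a)) ->
  filterlim g (at_left b) (locally (g b)) -> g a <= g b.
Proof.
  intros Hab Hga Hgb.
  assert (Hinner : forall t, a < t < b -> g a <= g t).
  { intros t Ht.
    apply (filterlim_le (F := at_right a) g (fun _ => g t) (g a) (g t));
      [| exact Hga | apply filterlim_const].
    exists (mkposreal (t - a) ltac:(lra)). intros y Hy Hay.
    apply Rabs_def2 in Hy. unfold minus, plus, opp in Hy; simpl in Hy.
    apply nondecreasing_of_derive_nonneg; lra. }
  apply (filterlim_le (F := at_left b) (fun _ => g a) g (g a) (g b));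
    [| apply filterlim_const | exact Hgb].
  exists (mkposreal (b - a) ltac:(lra)). intros y Hy Hyb.
  apply Rabs_def2 in Hy. unfold minus, plus, opp in Hy; simpl in Hy.
  apply Hinner. lra.
Qed.

End NonnegativeDerivative.

Lemma radial_flux_nonneg (f f' : R -> R) (t : R) :
  0 < t -> cont_on_halfline f ->
  (forall x, 0 < x < t -> is_derive f x (f' x)) ->
  (forall x, 0 < x < t -> 0 <= f x + x * f' x) -> 0 <= f t.
Proof.
  intros Ht Hf Hf' Hflux_derive.
  assert (Hflux_cont : cont_on_halfline (fun x => x * f x)).
  { apply cont_on_halfline_mult; [apply cont_on_halfline_id | exact Hf]. }
  assert (0 * f 0 <= t * f t).
  { apply (le_of_derive_nonneg (fun x => x * f x) (fun x => f x + x * f' x)).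
    - intros x Hx. replace (f x + x * f' x) with (1 * f x + x * f' x) by ring.
      exact (is_derive_mult (K := R_AbsRing) (fun x => x) f x 1 (f' x)
               (is_derive_id x) (Hf' x Hx) Rmult_comm).
    - exact Hflux_derive.
    - exact Ht.
    - exact (cont_on_halfline_at_right _ 0 Hflux_cont (Rle_refl 0)).
    - exact (cont_on_halfline_at_left _ t Hflux_cont Ht). }
  nra.
Qed.

Section RadialSteadyState.

Variables (D chi eps a b r0 : R) (rho phi phi1 phi2 : R -> R).
Hypotheses (hD : 0 < D) (hchi : 0 < chi) (heps : 0 < eps) (ha : 0 <= a) (hr0 : 0 < r0).
Hypothesis subcritical : a * (chi / eps) <= b.
Hypothesis rho_cont : cont_on_halfline rho.
Hypotheses (phi_cont : cont_on_halfline phi) (phi1_cont : cont_on_halfline phi1).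
Hypothesis phi_derive : forall x, 0 < x -> is_derive phi x (phi1 x).
Hypothesis phi1_derive : forall x, 0 < x -> is_derive phi1 x (phi2 x).
Hypothesis phi_nonneg : forall r, 0 <= r -> 0 <= phi r.
Hypothesis rho_pos : forall r, 0 <= r < r0 -> 0 < rho r.
Hypothesis rho_r0 : rho r0 = 0.
Hypothesis rho_eq : forall r, 0 < r < r0 ->
  exists drho, is_derive rho r drho /\ eps * rho r * drho = chi * rho r * phi1 r.
Hypothesis phi_eq : forall r, 0 < r ->
  D * phi2 r + D * (phi1 r / r) + a * rho r - b * phi r = 0.

Let chi_div_eps_ge0 : 0 <= chi / eps := Rlt_le _ _ (Rdiv_lt_0_compat _ _ hchi heps).

Lemma rho_derive x : 0 < x < r0 -> is_derive rho x (chi / eps * phi1 x).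
Proof.
  intros Hx. destruct (rho_eq x Hx) as [drho [Hdrho Heq]].
  assert (0 < rho x) by (apply rho_pos; lra).
  replace (chi / eps * phi1 x) with drho; [exact Hdrho |].
  apply (Rmult_eq_reg_l (eps * rho x)).
  - rewrite Heq. field. lra.
  - apply Rgt_not_eq, Rmult_lt_0_compat; lra.
Qed.

Lemma rho_le_scaled_phi r : 0 < r < r0 -> rho r <= chi / eps * phi r.
Proof.
  intros Hr.
  assert (Hcont : cont_on_halfline (fun x => rho x - chi / eps * phi x)).
  { apply cont_on_halfline_minus; [exact rho_cont |].
    apply cont_on_halfline_mult; [apply cont_on_halfline_const | exact phi_cont]. }
  assert (rho r - chi / eps * phi r <= rho r0 - chi / eps * phi r0).
  { apply (le_of_derive_nonneg (fun x => rho x - chi / eps * phi x)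
             (fun x => chi / eps * phi1 x - chi / eps * phi1 x) r r0).
    - intros x Hx. apply (is_derive_minus rho (fun x => chi / eps * phi x)).
      + apply rho_derive. lra.
      + apply is_derive_scal, phi_derive. lra.
    - intros x _. lra.
    - lra.
    - exact (cont_on_halfline_at_right _ r Hcont ltac:(lra)).
    - exact (cont_on_halfline_at_left _ r0 Hcont hr0). }
  assert (0 <= chi / eps * phi r0) by (apply Rmult_le_pos; [| apply phi_nonneg]; lra).
  lra.
Qed.

Lemma radial_flux_derive_nonneg x : 0 < x < r0 -> 0 <= phi1 x + x * phi2 x.
Proof.
  intros Hx.
  assert (rho x <= chi / eps * phi x) by (apply rho_le_scaled_phi; lra).
  assert (0 <= phi x) by (apply phi_nonneg; lra).
  assert (a * rho x <= b * phi x) by nra.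
  replace (phi1 x + x * phi2 x) with (x * (D * phi2 x + D * (phi1 x / x)) / D)
    by (field; lra).
  assert (0 <= D * phi2 x + D * (phi1 x / x)) by (pose proof (phi_eq x); lra).
  apply Rmult_le_pos; [apply Rmult_le_pos; lra | apply Rlt_le, Rinv_0_lt_compat; lra].
Qed.

Lemma phi1_nonneg x : 0 < x < r0 -> 0 <= phi1 x.
Proof.
  intros Hx. apply (radial_flux_nonneg phi1 phi2 x); [lra | exact phi1_cont | |].
  - intros y Hy. apply phi1_derive. lra.
  - intros y Hy. apply radial_flux_derive_nonneg. lra.
Qed.

Lemma rho0_le_rho_r0 : rho 0 <= rho r0.
Proof.
  apply (le_of_derive_nonneg rho (fun x => chi / eps * phi1 x) 0 r0).
  - exact rho_derive.
  - intros x Hx. apply Rmult_le_pos; [exact chi_div_eps_ge0 | apply phi1_nonneg; lra].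
  - exact hr0.
  - exact (cont_on_halfline_at_right rho 0 rho_cont (Rle_refl 0)).
  - exact (cont_on_halfline_at_left rho r0 rho_cont hr0).
Qed.

End RadialSteadyState.

Theorem mainTheorem2 (D chi eps a beta b : R)
  (hD : 0 < D) (hchi : 0 < chi) (heps : 0 < eps) (ha : 0 <= a)
  (hbeta : 0 < beta) (hb : b = D * beta ^ 2)
  (hcond : a * chi / (D * eps) - beta ^ 2 <= 0) :
  ~ (exists (rho0 phi0 r0 : R) (rho phi phi1 phi2 : R -> R),
       0 < rho0 /\ 0 < phi0 /\ 0 < r0 /\
       C0_halfline rho /\ C2_halfline_with phi phi1 phi2 /\
       (forall r, 0 <= r -> 0 <= rho r) /\
       (forall r, 0 <= r -> 0 <= phi r) /\
       rho 0 = rho0 /\ phi 0 = phi0 /\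
       (forall r, 0 <= r < r0 -> 0 < rho r) /\
       (forall r, r0 <= r -> rho r = 0) /\
       (forall r, 0 < r < r0 ->
          exists drho, is_derive rho r drho /\
            eps * rho r * drho = chi * rho r * phi1 r) /\
       (forall r, 0 < r ->
          D * phi2 r + D * (phi1 r / r) + a * rho r - b * phi r = 0)).
Proof.
  intros [rho0 [phi0 [r0 [rho [phi [phi1 [phi2 [Hrho0 [_ [Hr0 [Hrho_cont
    [[Hphi_derive [Hphi_cont [Hphi1_cont _]]] [_ [Hphi_nonneg [Hrho_0 [_
    [Hrho_pos [Hrho_supp [Hrho_eq Hphi_eq]]]]]]]]]]]]]]]]]]].
  assert (Hsubcritical : a * (chi / eps) <= b).
  { rewrite hb. replace (a * (chi / eps)) with (D * (a * chi / (D * eps))) by (field; lra).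
    apply Rmult_le_compat_l; lra. }
  assert (Hrho_r0 : rho r0 = 0) by (apply Hrho_supp; lra).
  assert (Hmono := rho0_le_rho_r0 D chi eps a b r0 rho phi phi1 phi2 hD hchi heps ha Hr0
    Hsubcritical Hrho_cont Hphi_cont Hphi1_cont
    (fun x Hx => proj1 (Hphi_derive x Hx)) (fun x Hx => proj2 (Hphi_derive x Hx))
    Hphi_nonneg Hrho_pos Hrho_r0 Hrho_eq Hphi_eq).
  lra.
Qed.
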